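(* Let $n\ge3$, $D>0$, $T\ge1$ and $G_1,\dots,G_T>0$. Consider the following $T$-round game on $\mathcal{D}^n_{++}$ with the affine-invariant metric. In round $t$ the player chooses a real diagonal matrix $Y_t$ with $\|Y_t\|_F\le D/2$ (i.e. the point $p_t=e^{Y_t}\in\mathcal{N}_D:=\{e^Y: Y\text{ real diagonal},\ \|Y\|_F\le D/2\}$), then the adversary chooses a real diagonal matrix $X_t$ with $\|X_t\|_F\le G_t$, which defines the loss $f_t(p)=-\mathrm{tr}(X_t\log p)$ on $\mathcal{D}^n_{++}$. Let $$\mathcal{V}_T=\inf_{Y_1}\sup_{X_1}\cdots\inf_{Y_T}\sup_{X_T}\Big[\sum_{t=1}^Tf_t(p_t)-\inf_{p\in\mathcal{N}_D}\sum_{t=1}^Tf_t(p)\Big].$$ Then $\mathcal{V}_T=\frac D2\sqrt{\sum_{t=1}^TG_t^2}$. Moreover, the player strategy $$Y_t=\frac D2\cdot\frac{\sum_{s=1}^{t-1}X_s}{\sqrt{\big\|\sum_{s=1}^{t-1}X_s\big\|_F^2+\sum_{s=t}^TG_s^2}}$$ guarantees regret at most $\frac D2\sqrt{\sum_{t=1}^TG_t^2}$ against every adversary.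
   Context: $\mathcal{D}^n_{++}$ is the set of $n\times n$ diagonal matrices with positive diagonal entries, a submanifold of the SPD matrices with the affine-invariant metric $\langle U,V\rangle_p=\mathrm{tr}(p^{-1}Up^{-1}V)$; its tangent spaces are the real diagonal matrices, $\mathrm{Exp}_I(Y)=e^Y$, and the distance is $d(p,q)=\big(\sum_i(\log\lambda_i(q^{-1/2}pq^{-1/2}))^2\big)^{1/2}$, so $\mathcal{N}_D$ is the geodesic ball of radius $D/2$ about $I$. $\|\cdot\|_F$ is the Frobenius norm, $\log$ the matrix logarithm. Each loss $f_t$ is a nonnegative multiple (at most $G_t$) of a Busemann function and is gsc-convex with gradient norm at most $G_t$. Empty sums equal $0$. *)

From HB Require Import structures.
From mathcomp Require Import all_boot all_order all_algebra.
From mathcomp Require Import all_classical all_reals all_analysis.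
Set Implicit Arguments. Unset Strict Implicit. Unset Printing Implicit Defensive.
Import Order.TTheory GRing.Theory Num.Theory.
Local Open Scope ring_scope.
Local Open Scope classical_set_scope.

Section Defs.
Variables (R : realType) (n : nat).

Definition frob (A : 'M[R]_n) : R := Num.sqrt (\sum_(i < n) \sum_(j < n) A i j ^+ 2).

Definition expD (Y : 'M[R]_n) : 'M[R]_n :=
  \matrix_(i, j) (if i == j then expR (Y i j) else 0).
Definition logD (p : 'M[R]_n) : 'M[R]_n :=
  \matrix_(i, j) (if i == j then ln (p i j) else 0).

Definition Dpp : set 'M[R]_n :=
  [set p | is_diag_mx p /\ forall i, 0 < p i i].

Definition ballD (D : R) : set 'M[R]_n :=
  [set Y | is_diag_mx Y /\ frob Y <= D / 2].
Definition N_D (D : R) : set 'M[R]_n := expD @` ballD D.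

Definition ballG (G : nat -> R) (t : nat) : set 'M[R]_n :=
  [set X | is_diag_mx X /\ frob X <= G t].

Definition loss (X p : 'M[R]_n) : R := - \tr (X *m logD p).

(* regret of a complete play of T rounds, moves given as functions of t (t = 0..T-1) *)
Definition regret (D : R) (T : nat) (Y X : nat -> 'M[R]_n) : \bar R :=
  ((\sum_(t < T) loss (X t) (expD (Y t)))%:E -
   ereal_inf [set (\sum_(t < T) loss (X t) p)%:E | p in N_D D])%E.

(* nested inf_Y sup_X game value; hist = list of played (Y_t, X_t) pairs *)
Fixpoint gameval (D : R) (G : nat -> R) (T : nat) (m : nat)
  (hist : seq ('M[R]_n * 'M[R]_n)) : \bar R :=
  match m with
  | 0 => regret D T (fun t => (nth (0, 0) hist t).1) (fun t => (nth (0, 0) hist t).2)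
  | m'.+1 =>
      ereal_inf [set ereal_sup [set gameval D G T m' (rcons hist (Y, X))
                               | X in ballG G (size hist)]
                | Y in ballD D]
  end.

Definition V_T (D : R) (G : nat -> R) (T : nat) : \bar R := gameval D G T T [::].

Definition strat (D : R) (G : nat -> R) (T : nat) (X : nat -> 'M[R]_n) (t : nat)
  : 'M[R]_n :=
  let S := \sum_(s < t) X s in
  (D / 2 / Num.sqrt (frob S ^+ 2 + \sum_(t <= s < T) G s ^+ 2)) *: S.

End Defs.

From HB Require Import structures.
From mathcomp Require Import all_boot all_order all_algebra.
From mathcomp Require Import all_classical all_reals all_analysis.
From mathcomp Require Import ring lra.
Import Order.TTheory GRing.Theory Num.Theory.
Local Open Scope ring_scope.
Local Open Scope classical_set_scope.
Set Implicit Arguments. Unset Strict Implicit. Unset Printing Implicit Defensive.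

(* A point of N_D is e^Y with Y real diagonal, and f_X(e^Y) = -tr(X log e^Y) = -<X,Y>,
   where <X,Y> = sum_i X_ii Y_ii.  The game is thus online linear optimisation over the
   Frobenius ball of radius D/2.  With S_k = X_0 + ... + X_(k-1) we use the potential
     Phi_k(S) = sqrt(|S|_F^2 + G_k^2 + ... + G_(T-1)^2).
   1. Cauchy-Schwarz: the best comparator in N_D has total loss -(D/2)|S_T|_F, so the
      regret equals L_T + (D/2) Phi_T(S_T), with L_T the cumulative loss of the player.
   2. One round: the move Y_k = (D/2) S_k / Phi_k(S_k) guarantees
      f_k(Y_k) + (D/2) Phi_(k+1)(S_k + X_k) <= (D/2) Phi_k(S_k) for every admissible X_k;
      conversely, as n >= 3, against any Y_k some X_k of norm G_k orthogonal to S_k and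
      Y_k gives f_k(Y_k) = 0 and Phi_(k+1) = Phi_k.  Hence inf_Y sup_X of the continuation
      value L + f(Y) + (D/2) Phi_(k+1) is exactly L + (D/2) Phi_k.
   3. Backward induction over the nested inf/sup shows that a history of k rounds is worth
      L_k + (D/2) Phi_k(S_k); the empty history gives V_T = (D/2) sqrt(sum_t G_t^2), and
      telescoping step 2 bounds the regret of the explicit strategy. *)

Lemma sum_sqr_ge0 (R : realDomainType) (I : Type) (r : seq I) (P : pred I) (F : I -> R) :
  0 <= \sum_(i <- r | P i) F i ^+ 2.
Proof. by apply: sumr_ge0 => i _; exact: sqr_ge0. Qed.

Lemma sum_pick (V : nmodType) (I : finType) (f : I -> V) (i : I) :
  (forall j, j != i -> f j = 0) -> \sum_j f j = f i.
Proof. by move=> f0; rewrite (bigD1 i) //= big1 ?addr0. Qed.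

(* Cauchy-Schwarz for finite sums, from Lagrange's identity
   sum_(i,j) (u_i v_j - u_j v_i)^2 = 2 (|u|^2 |v|^2 - <u,v>^2). *)
Lemma cauchy_schwarz_sum (R : realDomainType) (I : finType) (u v : I -> R) :
  (\sum_i u i * v i) ^+ 2 <= (\sum_i u i ^+ 2) * (\sum_i v i ^+ 2).
Proof.
have lagrange : \sum_i \sum_j (u i * v j - u j * v i) ^+ 2 =
    2 * ((\sum_i u i ^+ 2) * (\sum_i v i ^+ 2) - (\sum_i u i * v i) ^+ 2).
  have uv1 : (\sum_i u i ^+ 2) * (\sum_i v i ^+ 2) = \sum_i \sum_j u i ^+ 2 * v j ^+ 2.
    by rewrite big_distrlr.
  have uv2 : (\sum_i u i ^+ 2) * (\sum_i v i ^+ 2) = \sum_i \sum_j u j ^+ 2 * v i ^+ 2.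
    rewrite mulrC big_distrlr /=.
    by apply: eq_bigr => i _; apply: eq_bigr => j _; rewrite mulrC.
  have dot2 : (\sum_i u i * v i) ^+ 2 = \sum_i \sum_j (u i * v i) * (u j * v j).
    by rewrite expr2 big_distrlr.
  have -> : 2 * ((\sum_i u i ^+ 2) * (\sum_i v i ^+ 2) - (\sum_i u i * v i) ^+ 2) =
     (\sum_i u i ^+ 2) * (\sum_i v i ^+ 2) + (\sum_i u i ^+ 2) * (\sum_i v i ^+ 2)
      - 2 * (\sum_i u i * v i) ^+ 2 by ring.
  rewrite {1}uv1 uv2 dot2 -big_split /= mulr_sumr -sumrB; apply: eq_bigr => i _.
  rewrite -big_split /= mulr_sumr -sumrB; apply: eq_bigr => j _; ring.
have : 0 <= \sum_i \sum_j (u i * v j - u j * v i) ^+ 2.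
  by apply: sumr_ge0 => i _; exact: sum_sqr_ge0.
by rewrite lagrange pmulr_rge0 // subr_ge0.
Qed.

(* If Q^2 <= P^2 + 2d and P^2 + d >= 0 with P > 0, then Q <= P + d/P,
   because (P + d/P)^2 = P^2 + 2d + (d/P)^2. *)
Lemma le_add_ratio (R : realFieldType) (P Q d : R) : 0 < P -> 0 <= Q ->
  0 <= P ^+ 2 + d -> Q ^+ 2 <= P ^+ 2 + 2 * d -> Q <= P + d / P.
Proof.
move=> P_gt0 Q_ge0 Pd_ge0 hQ.
have bound_ge0 : 0 <= P + d / P.
  have -> : P + d / P = (P ^+ 2 + d) / P by field; rewrite gt_eqF.
  by rewrite divr_ge0 // ltW.
have bound_sq : P ^+ 2 + 2 * d <= (P + d / P) ^+ 2.
  have -> : (P + d / P) ^+ 2 = P ^+ 2 + 2 * d + (d / P) ^+ 2 by field; rewrite gt_eqF.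
  by rewrite lerDl sqr_ge0.
by rewrite -ler_sqr ?nnegrE //; exact: le_trans bound_sq.
Qed.

Section DiagonalGeometry.
Variables (R : realType) (n : nat).
Local Notation M := 'M[R]_n.

(* The inner product of the diagonals; on diagonal matrices it is the Frobenius one. *)
Definition dotd (A B : M) : R := \sum_i A i i * B i i.

Lemma frob_sq (A : M) : frob A ^+ 2 = \sum_i \sum_j A i j ^+ 2.
Proof. by rewrite /frob sqr_sqrtr //; apply: sumr_ge0 => i _; exact: sum_sqr_ge0. Qed.

Lemma frob_ge0 (A : M) : 0 <= frob A.
Proof. exact: sqrtr_ge0. Qed.

Lemma frob0 : frob (0 : M) = 0.
Proof.
by rewrite /frob big1 ?sqrtr0 // => i _; rewrite big1 // => j _; rewrite mxE expr2 mul0r.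
Qed.

Lemma frobZ c (A : M) : frob (c *: A) = `|c| * frob A.
Proof.
rewrite /frob -sqrtr_sqr -sqrtrM ?sqr_ge0 //; congr Num.sqrt.
rewrite mulr_sumr; apply: eq_bigr => i _; rewrite mulr_sumr; apply: eq_bigr => j _.
by rewrite mxE exprMn.
Qed.

Lemma frob_diag_mx (d : 'rV[R]_n) : frob (diag_mx d) = Num.sqrt (\sum_i d 0 i ^+ 2).
Proof.
rewrite /frob; congr Num.sqrt; apply: eq_bigr => i _.
rewrite (sum_pick (i := i)) => [|j ji]; first by rewrite mxE eqxx mulr1n.
by rewrite mxE eq_sym (negbTE ji) mulr0n expr2 mul0r.
Qed.

Lemma diag_add (A B : M) : is_diag_mx A -> is_diag_mx B -> is_diag_mx (A + B).
Proof.
move=> /is_diag_mxP A0 /is_diag_mxP B0; apply/is_diag_mxP => i j ij.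
by rewrite mxE A0 // B0 // addr0.
Qed.

Lemma diag_scale c (A : M) : is_diag_mx A -> is_diag_mx (c *: A).
Proof. by move=> /is_diag_mxP A0; apply/is_diag_mxP => i j ij; rewrite mxE A0 // mulr0. Qed.

Lemma diag_sum (X : nat -> M) k : (forall s, (s < k)%N -> is_diag_mx (X s)) ->
  is_diag_mx (\sum_(s < k) X s).
Proof.
move=> Xdiag; elim/big_ind: _ => [|A B|s _]; [exact: mx0_is_diag | exact: diag_add |].
exact: Xdiag (ltn_ord s).
Qed.

Lemma dotd_diag_mx (d : 'rV[R]_n) (A : M) : dotd (diag_mx d) A = \sum_i d 0 i * A i i.
Proof. by apply: eq_bigr => i _; rewrite mxE eqxx mulr1n. Qed.

Lemma dotdZr (A B : M) c : dotd A (c *: B) = c * dotd A B.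
Proof. by rewrite /dotd mulr_sumr; apply: eq_bigr => i _; rewrite mxE mulrCA. Qed.

Lemma dotd_suml (X : nat -> M) k (B : M) :
  dotd (\sum_(t < k) X t) B = \sum_(t < k) dotd (X t) B.
Proof. by rewrite /dotd exchange_big /=; apply: eq_bigr => i _; rewrite summxE mulr_suml. Qed.

Lemma dotd_self (A : M) : is_diag_mx A -> dotd A A = frob A ^+ 2.
Proof.
move=> /is_diag_mxP A0; rewrite frob_sq; apply: eq_bigr => i _.
by rewrite (sum_pick (i := i)) ?expr2 // => j ji; rewrite A0 ?expr2 ?mul0r // eq_sym.
Qed.

Lemma dotd_norm_le (A B : M) : `|dotd A B| <= frob A * frob B.
Proof.
have diag_le (C : M) : \sum_i C i i ^+ 2 <= frob C ^+ 2.
  rewrite frob_sq; apply: ler_sum => i _.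
  by rewrite (bigD1 i) //= lerDl sum_sqr_ge0.
have AB_ge0 : 0 <= frob A * frob B by rewrite mulr_ge0 ?frob_ge0.
rewrite -(ger0_norm AB_ge0) -!sqrtr_sqr ler_sqrt ?sqr_ge0 //.
apply: le_trans (cauchy_schwarz_sum _ _) _.
by rewrite exprMn ler_pM ?sum_sqr_ge0 ?diag_le.
Qed.

Lemma frob_addD (S X : M) : is_diag_mx X ->
  frob (S + X) ^+ 2 = frob S ^+ 2 + 2 * dotd X S + frob X ^+ 2.
Proof.
move=> /is_diag_mxP X0.
have cross : \sum_i \sum_j S i j * X i j = dotd X S.
  apply: eq_bigr => i _; rewrite (sum_pick (i := i)) => [|j ji]; first exact: mulrC.
  by rewrite X0 ?mulr0 // eq_sym.
rewrite !frob_sq -cross mulr_sumr -!big_split /=; apply: eq_bigr => i _.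
rewrite mulr_sumr -!big_split /=; apply: eq_bigr => j _; rewrite mxE; ring.
Qed.

Lemma loss_expD (X Y : M) : loss X (expD Y) = - dotd X Y.
Proof.
rewrite /loss /dotd /mxtrace; congr (- _); apply: eq_bigr => i _.
rewrite mxE (sum_pick (i := i)) => [|j ji]; first by rewrite !mxE !eqxx expRK.
by rewrite !mxE (negbTE ji) mulr0.
Qed.

Lemma sum_loss_expD (X : nat -> M) k (Y : M) :
  \sum_(t < k) loss (X t) (expD Y) = - dotd (\sum_(t < k) X t) Y.
Proof. by rewrite dotd_suml -sumrN; apply: eq_bigr => t _; rewrite loss_expD. Qed.

Lemma scaled_in_ballD (D r : R) (S : M) : 0 <= D -> is_diag_mx S -> frob S <= r ->
  ballD D ((D / 2 / r) *: S).
Proof.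
move=> D_ge0 S_diag S_le; split; first exact: diag_scale.
have r_ge0 : 0 <= r := le_trans (frob_ge0 S) S_le.
rewrite frobZ ger0_norm ?divr_ge0 //.
have [->|r_neq0] := eqVneq r 0; first by rewrite invr0 !mulr0 mul0r divr_ge0.
rewrite mulrAC ler_pdivrMr ?lt_def ?r_neq0 //.
by rewrite ler_wpM2l // divr_ge0.
Qed.

Lemma two_equations_solution (a b : 'I_n -> R) : (3 <= n)%N ->
  exists2 v : 'I_n -> R, 0 < \sum_k v k ^+ 2 & \sum_k v k * a k = 0 /\ \sum_k v k * b k = 0.
Proof.
move=> n_ge3; pose C : 'M[R]_(n, 2) := \matrix_(k, c) (if c == 0 then a k else b k).
have /matrix0Pn [i [j Kij]] : kermx C != 0.
  rewrite -mxrank_eq0 mxrank_ker subn_eq0 -ltnNge.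
  exact: leq_ltn_trans (rank_leq_col C) n_ge3.
pose v k := kermx C i k.
have kerC c : \sum_k v k * C k c = 0.
  by have := congr1 (fun A : 'M[R]_(n, 2) => A i c) (mulmx_ker C); rewrite !mxE.
exists v.
  apply: (@lt_le_trans _ _ (v j ^+ 2)); first by rewrite lt_def sqrf_eq0 Kij sqr_ge0.
  by rewrite (bigD1 j) //= lerDl sum_sqr_ge0.
split; [transitivity (\sum_k v k * C k 0) | transitivity (\sum_k v k * C k 1)];
  by [apply: eq_bigr => k _; rewrite mxE | exact: kerC].
Qed.

Lemma diag_orthogonal (A B : M) (g : R) : (3 <= n)%N -> 0 <= g ->
  exists X : M, [/\ is_diag_mx X, frob X = g, dotd X A = 0 & dotd X B = 0].
Proof.
move=> n_ge3 g_ge0.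
have [v v_pos [vA vB]] := two_equations_solution (fun k => A k k) (fun k => B k k) n_ge3.
pose c := g / Num.sqrt (\sum_k v k ^+ 2).
pose X := diag_mx (\row_k (c * v k)).
have orth (C : M) : \sum_k v k * C k k = 0 -> dotd X C = 0.
  move=> vC; rewrite dotd_diag_mx.
  transitivity (c * \sum_k v k * C k k); last by rewrite vC mulr0.
  by rewrite mulr_sumr; apply: eq_bigr => k _; rewrite mxE mulrA.
exists X; split; [exact: diag_mx_is_diag | | exact: orth | exact: orth].
rewrite frob_diag_mx.
have -> : \sum_k (\row_k (c * v k)) 0 k ^+ 2 = g ^+ 2.
  under eq_bigr => k _ do rewrite mxE exprMn.
  rewrite -mulr_sumr /c exprMn exprVn sqr_sqrtr ?ltW // mulfVK //.
  by rewrite gt_eqF.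
by rewrite sqrtr_sqr ger0_norm.
Qed.

End DiagonalGeometry.

Section Regret.
Variables (R : realType) (n : nat).
Local Notation M := 'M[R]_n.

Definition cumloss (Y X : nat -> M) (k : nat) : R := \sum_(t < k) loss (X t) (expD (Y t)).

(* The best fixed point of N_D against a diagonal cumulative gradient S is
   e^((D/2) S/|S|_F), with total loss -(D/2)|S|_F. *)
Lemma best_fixed_loss (D : R) T (X : nat -> M) : 0 <= D -> is_diag_mx (\sum_(t < T) X t) ->
  ereal_inf [set (\sum_(t < T) loss (X t) p)%:E | p in N_D D] =
  (- (D / 2 * frob (\sum_(t < T) X t)))%:E.
Proof.
move=> D_ge0; set S := \sum_(t < T) X t => S_diag.
apply/le_anti/andP; split.
  apply: ereal_inf_lbound; exists (expD ((D / 2 / frob S) *: S)).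
    by exists ((D / 2 / frob S) *: S) => //; exact: scaled_in_ballD.
  rewrite sum_loss_expD dotdZr dotd_self //; congr (- _)%:E.
  have [->|S_neq0] := eqVneq (frob S) 0; first by rewrite expr2 !mulr0.
  by field.
apply: le_ereal_inf_tmp => _ [_ [Y [_ Y_le] <-] <-].
rewrite lee_fin sum_loss_expD lerN2 mulrC.
apply: le_trans (ler_norm _) _; apply: le_trans (dotd_norm_le _ _) _.
by rewrite ler_wpM2l ?frob_ge0.
Qed.

Lemma regret_closed (D : R) T (Y X : nat -> M) : 0 <= D -> is_diag_mx (\sum_(t < T) X t) ->
  regret D T Y X = (cumloss Y X T + D / 2 * frob (\sum_(t < T) X t))%:E.
Proof. by move=> D_ge0 S_diag; rewrite /regret best_fixed_loss // -EFinB opprK. Qed.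

End Regret.

Section Game.
Variables (R : realType) (n : nat) (D : R) (G : nat -> R) (T : nat).
Hypotheses (D_ge0 : 0 <= D) (G_pos : forall t, (t < T)%N -> 0 < G t).
Local Notation M := 'M[R]_n.

Definition pot (S : M) (k : nat) : R := Num.sqrt (frob S ^+ 2 + \sum_(k <= s < T) G s ^+ 2).

Definition play (S : M) (k : nat) : M := (D / 2 / pot S k) *: S.

Lemma stratE (X : nat -> M) k : strat D G T X k = play (\sum_(s < k) X s) k.
Proof. by []. Qed.

Lemma pot_sq (S : M) k : pot S k ^+ 2 = frob S ^+ 2 + \sum_(k <= s < T) G s ^+ 2.
Proof. by rewrite sqr_sqrtr // addr_ge0 ?sqr_ge0 ?sum_sqr_ge0. Qed.

Lemma pot_pos (S : M) k : (k < T)%N -> 0 < pot S k.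
Proof.
move=> kT; rewrite /pot sqrtr_gt0 (big_ltn kT).
have Gk2_gt0 : 0 < G k ^+ 2 by rewrite exprn_gt0 // G_pos.
have tail_ge0 : 0 <= \sum_(k.+1 <= s < T) G s ^+ 2 by exact: sum_sqr_ge0.
by have := sqr_ge0 (frob S); lra.
Qed.

Lemma pot_ge_frob (S : M) k : frob S <= pot S k.
Proof.
rewrite /pot -{1}(ger0_norm (frob_ge0 S)) -sqrtr_sqr ler_sqrt.
  by rewrite lerDl sum_sqr_ge0.
by rewrite addr_ge0 ?sqr_ge0 ?sum_sqr_ge0.
Qed.

Lemma pot_start : pot 0 0 = Num.sqrt (\sum_(t < T) G t ^+ 2).
Proof. by rewrite /pot frob0 expr0n /= add0r big_mkord. Qed.

Lemma pot_end (S : M) : pot S T = frob S.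
Proof. by rewrite /pot big_geq // addr0 sqrtr_sqr ger0_norm ?frob_ge0. Qed.

Lemma play_in_ballD (S : M) k : is_diag_mx S -> ballD D (play S k).
Proof. by move=> S_diag; apply: scaled_in_ballD => //; exact: pot_ge_frob. Qed.

Lemma play_step (S X : M) k : (k < T)%N -> is_diag_mx X -> frob X <= G k ->
  loss X (expD (play S k)) + D / 2 * pot (S + X) k.+1 <= D / 2 * pot S k.
Proof.
move=> kT X_diag X_le; have P_gt0 := pot_pos S kT.
set P := pot S k; set d := dotd X S; set tail := \sum_(k.+1 <= s < T) G s ^+ 2.
have tail_ge0 : 0 <= tail by exact: sum_sqr_ge0.
have P2 : P ^+ 2 = frob S ^+ 2 + G k ^+ 2 + tail by rewrite pot_sq (big_ltn kT) addrA.
have Q2 : pot (S + X) k.+1 ^+ 2 = frob S ^+ 2 + 2 * d + frob X ^+ 2 + tail.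
  by rewrite pot_sq frob_addD.
have := dotd_norm_le X S; rewrite -/d ler_norml => /andP[d_lo _].
have X_ge0 := frob_ge0 X; have S_ge0 := frob_ge0 S.
have Q_le : pot (S + X) k.+1 <= P + d / P.
  apply: le_add_ratio => //; first exact: sqrtr_ge0.
    by rewrite P2; nra.
  by rewrite Q2 P2; nra.
have -> : loss X (expD (play S k)) = - (D / 2 * (d / P)).
  by rewrite loss_expD /play dotdZr -/d -/P mulrAC -mulrA.
have : D / 2 * pot (S + X) k.+1 <= D / 2 * (P + d / P) by rewrite ler_wpM2l ?divr_ge0.
by rewrite mulrDr; lra.
Qed.

Lemma strat_telescope (X : nat -> M) : (forall t, (t < T)%N -> ballG G t (X t)) ->
  forall k, (k <= T)%N ->
  cumloss (strat D G T X) X k + D / 2 * pot (\sum_(s < k) X s) k <= D / 2 * pot 0 0.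
Proof.
move=> X_in; elim=> [|k IH] kT; first by rewrite /cumloss !big_ord0 add0r.
have [X_diag X_le] := X_in k kT.
have := play_step (\sum_(s < k) X s) kT X_diag X_le.
have := IH (ltnW kT).
by rewrite /cumloss !big_ord_recr /= stratE; lra.
Qed.

Hypothesis n_ge3 : (3 <= n)%N.

(* Against any move Y the adversary keeps the potential at zero loss, moving orthogonally
   to both S and Y with full norm G_k. *)
Lemma adversary_step (S Y : M) k : (k < T)%N ->
  exists2 X, ballG G k X & loss X (expD Y) = 0 /\ pot (S + X) k.+1 = pot S k.
Proof.
move=> kT.
have [X [X_diag X_norm XS XY]] := diag_orthogonal S Y n_ge3 (ltW (G_pos kT)).
exists X; first by split; rewrite ?X_norm.
rewrite loss_expD XY oppr0; split=> //.
by rewrite /pot frob_addD // XS X_norm (big_ltn kT); congr Num.sqrt; ring.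
Qed.

Lemma round_value (V : M -> M -> \bar R) (S : M) (L : R) k : (k < T)%N -> is_diag_mx S ->
  (forall Y X, ballG G k X -> V Y X = (L + loss X (expD Y) + D / 2 * pot (S + X) k.+1)%:E) ->
  ereal_inf [set ereal_sup [set V Y X | X in ballG G k] | Y in ballD D] =
  (L + D / 2 * pot S k)%:E.
Proof.
move=> kT S_diag V_eq; apply/le_anti/andP; split.
  apply: (@le_trans _ _ (ereal_sup [set V (play S k) X | X in ballG G k])).
    by apply: ereal_inf_lbound; exists (play S k) => //; exact: play_in_ballD.
  apply: ge_ereal_sup => _ [X X_in <-]; have [X_diag X_le] := X_in.
  by rewrite V_eq // lee_fin -addrA lerD2l play_step.
apply: le_ereal_inf_tmp => _ [Y _ <-].
have [X X_in [loss0 pot_eq]] := adversary_step S Y kT.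
apply: ereal_sup_ubound; exists X => //.
by rewrite V_eq // loss0 addr0 pot_eq.
Qed.

Definition hY (h : seq (M * M)) (t : nat) : M := (nth (0, 0) h t).1.
Definition hX (h : seq (M * M)) (t : nat) : M := (nth (0, 0) h t).2.
Definition hsum (h : seq (M * M)) : M := \sum_(t < size h) hX h t.

Definition histval (h : seq (M * M)) : R :=
  cumloss (hY h) (hX h) (size h) + D / 2 * pot (hsum h) (size h).

Lemma histval_rcons (h : seq (M * M)) Y X : histval (rcons h (Y, X)) =
  cumloss (hY h) (hX h) (size h) + loss X (expD Y) + D / 2 * pot (hsum h + X) (size h).+1.
Proof.
have prefix (t : 'I_(size h)) : nth (0, 0) (rcons h (Y, X)) t = nth (0, 0) h t.
  by rewrite nth_rcons ltn_ord.
have lastX : hX (rcons h (Y, X)) (size h) = X by rewrite /hX nth_rcons ltnn eqxx.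
have lastY : hY (rcons h (Y, X)) (size h) = Y by rewrite /hY nth_rcons ltnn eqxx.
have hsum_prefix : \sum_(t < size h) hX (rcons h (Y, X)) t = hsum h.
  by apply: eq_bigr => t _; rewrite /hX prefix.
have cumloss_prefix : \sum_(t < size h) loss (hX (rcons h (Y, X)) t) (expD (hY (rcons h (Y, X)) t))
    = cumloss (hY h) (hX h) (size h).
  by apply: eq_bigr => t _; rewrite /hX /hY prefix.
rewrite /histval {1}/cumloss /hsum size_rcons !big_ord_recr /= lastX lastY.
by rewrite hsum_prefix cumloss_prefix.
Qed.

Lemma gameval_hist m (h : seq (M * M)) : (size h + m)%N = T ->
  (forall t, (t < size h)%N -> is_diag_mx (hX h t)) ->
  gameval D G T m h = (histval h)%:E.
Proof.
elim: m h => [|m IH] h hm h_diag.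
  rewrite addn0 in hm.
  have S_diag : is_diag_mx (\sum_(t < T) hX h t) by rewrite -hm; exact: diag_sum.
  by rewrite /= regret_closed // /histval /hsum hm pot_end.
have kT : (size h < T)%N by rewrite -hm addnS ltnS leq_addr.
apply: (round_value (V := fun Y X => gameval D G T m (rcons h (Y, X)))) => //.
  exact: diag_sum.
move=> Y X [X_diag _].
have hist_diag t : (t < size (rcons h (Y, X)))%N -> is_diag_mx (hX (rcons h (Y, X)) t).
  rewrite size_rcons ltnS leq_eqVlt => /orP[/eqP ->|th].
    by rewrite /hX nth_rcons ltnn eqxx.
  by rewrite /hX nth_rcons th; exact: h_diag.
by rewrite IH ?histval_rcons // size_rcons addSnnS.
Qed.

Lemma histval_nil : histval [::] = D / 2 * Num.sqrt (\sum_(t < T) G t ^+ 2).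
Proof. by rewrite /histval /hsum /cumloss /= !big_ord0 add0r pot_start. Qed.

End Game.

Theorem mainTheorem4 (R : realType) (n : nat) (D : R) (T : nat) (G : nat -> R) :
  (3 <= n)%N -> 0 < D -> (1 <= T)%N -> (forall t, (t < T)%N -> 0 < G t) ->
  V_T n D G T = (D / 2 * Num.sqrt (\sum_(t < T) G t ^+ 2))%:E /\
  (forall X : nat -> 'M[R]_n,
     (forall t, (t < T)%N -> ballG G t (X t)) ->
     (forall t, (t < T)%N -> ballD D (strat D G T X t)) /\
     (regret D T (strat D G T X) X <= (D / 2 * Num.sqrt (\sum_(t < T) G t ^+ 2))%:E)%E).
Proof.
move=> n_ge3 D_gt0 _ G_pos; have D_ge0 := ltW D_gt0.
split.
  by rewrite /V_T (gameval_hist D_ge0 G_pos n_ge3 (h := [::])) // histval_nil.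
move=> X X_in.
have S_diag k : (k <= T)%N -> is_diag_mx (\sum_(s < k) X s).
  by move=> kT; apply: diag_sum => s sk; have [] := X_in s (leq_trans sk kT).
split=> [t tT|]; first by rewrite stratE; apply: play_in_ballD => //; exact: S_diag (ltnW tT).
have bound := strat_telescope D_ge0 G_pos X_in (leqnn T).
rewrite pot_end pot_start in bound.
by rewrite regret_closed ?S_diag // lee_fin.
Qed.
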